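(* Let $X$ be the Riemannian universal covering of a compact Riemannian manifold $M=X/\Gamma$, and let $\{U_n\}$ be a sequence of subsets of $X$ with $\lim_n|\partial_dU_n|/|U_n|=0$ for all $d>0$. Then for every $r>0$ there is an index $n_0=n_0(r)$ such that for every $n\ge n_0$ the set $U_n$ contains a metric ball of radius $r$. Moreover, if $\{V_n\}$ is an approximation of $\{U_n\}$, then also $\lim_n|\partial_dV_n|/|V_n|=0$ for all $d>0$.
   Context: $\partial_dU=\{x\in X:d(x,\partial U)\le d\}$; $|\cdot|$ is Riemannian volume. $\{V_n\}$ (open sets) is an approximation of $\{U_n\}$ if there is a fixed $h>0$ with $U_n\,\Delta\,V_n\subset\partial_hU_n$ for all $n$. *)

From HB Require Import structures.
From mathcomp Require Import all_boot all_order all_algebra.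
From mathcomp Require Import all_classical all_reals all_analysis.
Set Implicit Arguments. Unset Strict Implicit. Unset Printing Implicit Defensive.
Import Order.TTheory GRing.Theory Num.Theory.
Local Open Scope classical_set_scope.
Local Open Scope ring_scope.

Section MetricDefs.
Context {R : realType} {X : Type} (dist : X -> X -> R).

Definition is_metric : Prop :=
  [/\ forall x y, dist x y = 0 <-> x = y,
      forall x y, dist x y = dist y x &
      forall x y z, dist x z <= dist x y + dist y z].

(* geodesic space: any two points are joined by a minimizing geodesic
   (true for a complete Riemannian manifold by Hopf--Rinow) *)
Definition geodesic_space : Prop :=
  forall x y, exists g : R -> X, [/\ g 0 = x, g 1 = y &
    forall s t, 0 <= s <= 1 -> 0 <= t <= 1 ->
      dist (g s) (g t) = `|s - t| * dist x y].

Definition mball (c : X) (r : R) : set X := [set y | dist c y < r].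

Definition mopen (A : set X) : Prop :=
  forall x, A x -> exists2 e, 0 < e & mball x e `<=` A.

Definition mclosure (A : set X) : set X :=
  [set x | forall e, 0 < e -> exists2 y, A y & dist x y < e].

Definition mboundary (A : set X) : set X := mclosure A `&` mclosure (~` A).

(* distance from a point to a set (inf over the empty set is +oo) *)
Definition dist_set (x : X) (A : set X) : \bar R :=
  ereal_inf [set (dist x y)%:E | y in A].

(* \partial_d U = { x : d(x, \partial U) <= d } *)
Definition bnbhd (d : R) (U : set X) : set X :=
  [set x | (dist_set x (mboundary U) <= d%:E)%E].

End MetricDefs.

Definition is_approximation {R : realType} {X : Type} (dist : X -> X -> R)
  (U V : nat -> set X) : Prop :=
  (forall n, mopen dist (V n)) /\
  exists2 h : R, 0 < h & forall n,
    ((U n `\` V n) `|` (V n `\` U n)) `<=` bnbhd dist h (U n).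

Definition boundary_ratio_vanishes {R : realType} {d0 : measure_display}
  {X : measurableType d0} (dist : X -> X -> R)
  (mu : {measure set X -> \bar R}) (U : nat -> set X) : Prop :=
  forall d : R, 0 < d ->
    ((fun n => (mu (bnbhd dist d (U n)) / mu (U n))%E) @ \oo --> 0%E).

(* If [U] contains no ball of radius [r], every point of [U] lies within [r]
   of a point outside [U], and the geodesic between the two crosses the
   boundary of [U]; hence [U ⊆ ∂_r U] and [|∂_r U| / |U| ≥ 1], which cannot
   happen for large [n].  If [V] approximates [U] with constant [h], the same
   crossing argument gives [∂V ⊆ ∂_h U], so [∂_d V ⊆ ∂_(d+h) U]; moreover
   [|V| ≥ |U| - |∂_h U| ≥ |U| / 2] eventually, whence
   [|∂_d V| / |V| ≤ 2 |∂_(d+h) U| / |U| → 0]. *)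

From HB Require Import structures.
From mathcomp Require Import all_boot all_order all_algebra.
From mathcomp Require Import all_classical all_reals all_analysis.
From mathcomp Require Import lra.
Import Order.TTheory GRing.Theory Num.Theory.
Local Open Scope classical_set_scope.
Local Open Scope ring_scope.

Section Metric.
Context {R : realType} {X : Type} {dist : X -> X -> R}.
Hypothesis dist_metric : is_metric dist.

Lemma distxx x : dist x x = 0.
Proof. by case: dist_metric => eq0 _ _; apply/eq0. Qed.

Lemma distC x y : dist x y = dist y x.
Proof. by case: dist_metric. Qed.

Lemma dist_triangle x y z : dist x z <= dist x y + dist y z.
Proof. by case: dist_metric. Qed.

Lemma dist_ge0 x y : 0 <= dist x y.
Proof. by have := dist_triangle x y x; rewrite distxx (distC y x); lra. Qed.

Lemma dist_set_le (B : set X) x y :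
  B y -> (dist_set dist x B <= (dist x y)%:E)%E.
Proof. by move=> By; apply: ereal_inf_lbound; exists y. Qed.

Lemma dist_set_triangle (B : set X) x y :
  (dist_set dist x B <= (dist x y)%:E + dist_set dist y B)%E.
Proof.
rewrite -leeBlDl //; apply: le_ereal_inf_tmp => _ [z Bz <-].
rewrite leeBlDl //; apply: le_trans (dist_set_le _ x _ Bz) _.
by rewrite -EFinD lee_fin dist_triangle.
Qed.

Lemma dist_set_le_add (B C : set X) h x :
  (forall y, B y -> (dist_set dist y C <= h%:E)%E) ->
  (dist_set dist x C <= dist_set dist x B + h%:E)%E.
Proof.
move=> BC; rewrite addeC -leeBlDl //; apply: le_ereal_inf_tmp => _ [y By <-].
rewrite leeBlDl //; apply: le_trans (dist_set_triangle C x y) _.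
by rewrite addeC leeD2r // BC.
Qed.

Lemma mboundaryC (U : set X) : mboundary dist (~` U) = mboundary dist U.
Proof. by rewrite /mboundary setCK setIC. Qed.

Lemma mboundary_near (U : set X) x e : mboundary dist U x -> 0 < e ->
  exists2 z, dist x z < e & (U z <-> ~ U x).
Proof.
move=> [clU clUC] e0; have [Ux|nUx] := pselect (U x).
- by have [z nUz xz] := clUC e e0; exists z.
- by have [z Uz xz] := clU e e0; exists z.
Qed.

Lemma mopen_setC_bnbhd d (U : set X) : mopen dist (~` bnbhd dist d U).
Proof.
move=> x /negP; rewrite /bnbhd /= -ltNge.
set D := dist_set dist x _ => dD.
have [e e0 de] : exists2 e : R, 0 < e & ((d + e)%:E <= D)%E.
  case: D dD => [v| |] //= dv; last by exists 1; rewrite ?leey.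
  by exists (v - d); [rewrite subr_gt0 -lte_fin | rewrite addrC subrK].
exists e => // y xy Dy; rewrite /mball /= in xy.
have : (D <= (dist x y + d)%:E)%E.
  by rewrite EFinD (le_trans (dist_set_triangle _ x y)) // leeD2l.
rewrite leNgt => /negP; apply; apply: lt_le_trans de; rewrite lte_fin; lra.
Qed.

Section Geodesic.
Hypothesis dist_geodesic : geodesic_space dist.

Lemma geodesic_mboundary (U : set X) x y : U x -> ~ U y ->
  exists2 b, mboundary dist U b & dist x b <= dist x y.
Proof.
move=> Ux nUy; have [g [g0 g1 gd]] := dist_geodesic x y.
set D := dist x y; have D0 : 0 <= D by apply: dist_ge0.
pose S := [set t : R | 0 <= t <= 1 /\ ~ U (g t)].
have S1 : S 1 by split; [rewrite ler01 lexx | rewrite g1].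
have infS : has_inf S by split; [exists 1 | exists 0 => t [/andP[]]].
(* [g s] is where the geodesic first leaves [U]. *)
set s := inf S.
have s0 : 0 <= s by apply: lb_le_inf; [exists 1 | move=> t [/andP[]]].
have s_lb : lbound S s by apply: ge_inf; case: infS.
have s1 : s <= 1 by apply: s_lb.
have k_gt0 e : 0 < e -> 0 < e / (D + 1).
  by move=> e0; rewrite divr_gt0 ?ltr_wpDl.
have near_gs e t : 0 < e -> 0 <= t <= 1 -> `|s - t| <= e / (D + 1) ->
    dist (g s) (g t) < e.
  move=> e0 t01 st; rewrite gd ?s0 ?s1 // -/D.
  apply: le_lt_trans (ler_wpM2r D0 st) _.
  by rewrite mulrAC ltr_pdivrMr ?ltr_wpDl // ltr_pM2l // ltrDl.
exists (g s); first split=> e e0.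
- have [sk|ks] := leP s (e / (D + 1)).
    by exists x => //; rewrite -g0 near_gs ?ler01 ?lexx // subr0 ger0_norm.
  have k0 := k_gt0 e e0; set t := s - e / (D + 1).
  have t01 : 0 <= t <= 1 by rewrite /t; lra.
  exists (g t).
    apply: contrapT => nUt; suff : s <= t by rewrite /t; lra.
    by apply: s_lb.
  by rewrite near_gs // /t opprB addrC subrK ger0_norm // ltW.
- have [u [u01 nUu] ult] := inf_adherent (k_gt0 e e0) infS.
  have su : s <= u by apply: s_lb.
  by exists (g u) => //; rewrite near_gs // distrC ger0_norm; lra.
- rewrite -g0 gd ?s0 ?s1 ?ler01 ?lexx // sub0r normrN ger0_norm //.
  by rewrite ler_piMl.
Qed.

Lemma dist_set_mboundary_le (U : set X) x y : (U y <-> ~ U x) ->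
  (dist_set dist x (mboundary dist U) <= (dist x y)%:E)%E.
Proof.
move=> Uxy; have [Ux|nUx] := pselect (U x).
- have [b bU xb] := geodesic_mboundary _ _ _ Ux (fun Uy => Uxy.1 Uy Ux).
  exact: le_trans (dist_set_le _ x _ bU) _.
- have nnUy : ~ (~` U) y := fun nUy => nUy (Uxy.2 nUx).
  have [b bU xb] := geodesic_mboundary (~` U) _ _ nUx nnUy.
  by rewrite mboundaryC in bU; apply: le_trans (dist_set_le _ x _ bU) _.
Qed.

Lemma sub_bnbhd_no_ball (U : set X) r :
  ~ (exists c, mball dist c r `<=` U) -> U `<=` bnbhd dist r U.
Proof.
move=> noball x Ux.
have /existsNP[y /not_implyP[xy nUy]] : ~ mball dist x r `<=` U.
  by move=> xrU; apply: noball; exists x.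
have Uyx : U y <-> ~ U x by split=> // /(_ Ux).
by apply: le_trans (dist_set_mboundary_le _ _ _ Uyx) _; rewrite lee_fin ltW.
Qed.

Lemma mboundary_sub_bnbhd (U V : set X) h : 0 <= h ->
  ((U `\` V) `|` (V `\` U)) `<=` bnbhd dist h U ->
  mboundary dist V `<=` bnbhd dist h U.
Proof.
move=> h0 UVh x Vx; apply/lee_addgt0Pr => e e0.
have [z xz Vzx] := mboundary_near _ _ _ Vx e0.
have [Uzx|Uzx] := pselect (U z <-> ~ U x).
  apply: le_trans (dist_set_mboundary_le _ _ _ Uzx) _.
  by rewrite -EFinD lee_fin; have := dist_ge0 x z; lra.
have [UVx|UVx] := pselect (((U `\` V) `|` (V `\` U)) x).
  by apply: le_trans (UVh _ UVx) _; rewrite leeDl // lee_fin ltW.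
(* [z] is on the same side of [U] as [x] but not of [V], and [x] is outside
   the symmetric difference, so [z] is inside it. *)
apply: le_trans (dist_set_triangle _ x z) _.
rewrite addeC; apply: leeD; last by rewrite lee_fin ltW.
apply: UVh; move: Uzx UVx Vzx; rewrite /setU /setD /=.
by have [] := pselect (U x); have [] := pselect (U z);
   have [] := pselect (V x); have [] := pselect (V z); tauto.
Qed.

Lemma bnbhd_approx_sub (U V : set X) h d : 0 <= h ->
  ((U `\` V) `|` (V `\` U)) `<=` bnbhd dist h U ->
  bnbhd dist d V `<=` bnbhd dist (d + h) U.
Proof.
move=> h0 UVh x; rewrite /bnbhd /= EFinD => Vxd.
apply: le_trans (dist_set_le_add (mboundary dist V) _ h x _) (leeD2r _ Vxd).
exact: mboundary_sub_bnbhd.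
Qed.

End Geodesic.
End Metric.

Section ExtendedRatios.
Context {R : realType}.
Local Open Scope ereal_scope.

Lemma cvge_ratio0_le (a b : nat -> \bar R) :
  (forall n, 0 < b n < +oo) -> (fun n => a n / b n) @ \oo --> 0 ->
  forall e : R, (0 < e)%R -> \forall n \near \oo, a n <= e%:E * b n.
Proof.
move=> b_pos ab0 e e0.
have : \forall n \near \oo, a n / b n <= e%:E.
  apply: (ab0 (fun x => x <= e%:E)).
  by apply: filterS (lt_nbhsl e0) => r /ltW; rewrite /= lee_fin.
apply: filterS => n; case: (b n) (b_pos n) => [u /andP[u0 _]| /andP[_] |] //.
have {}u0 : (0 < u)%R := u0.
by rewrite inver gt_eqF // lee_pdivrMr // muleC.
Qed.

Lemma lee_ratio (p q u v : \bar R) (c : R) : (0 < c)%R ->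
  0 <= p <= q -> 0 < u < +oo -> u <= c%:E * v -> p / v <= c%:E * (q / u).
Proof.
move=> c0 /andP[p0 pq]; case: u => [u /andP[u0 _]| /andP[_] |] // uv.
have {}u0 : (0 < u)%R := u0.
have q0 := le_trans p0 pq.
case: v uv => [v| |] uv; last 2 first.
- rewrite invey mule0; apply: mule_ge0; first by rewrite lee_fin ltW.
  by apply: mule_ge0; rewrite // inve_ge0 lee_fin ltW.
- by move: uv; rewrite gt0_muleNy ?lte_fin // leeNy_eq.
have v0 : (0 < v)%R by move: uv; rewrite -EFinM lee_fin; nra.
case: q pq q0 => [q| |] // pq q0; last first.
  rewrite !inver !gt_eqF // mulyr gtr0_sg ?invr_gt0 // mul1e.
  by rewrite gt0_muley ?lte_fin // leey.
case: p p0 pq => [p| |] // p0 pq; rewrite !lee_fin in p0 pq q0 uv.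
rewrite !inver !gt_eqF // -!EFinM lee_fin ler_pdivrMr //.
have qu : (q / u * u = q)%R by rewrite divfK // gt_eqF.
have qu0 : (0 <= q / u)%R := divr_ge0 q0 (ltW u0).
nra.
Qed.

End ExtendedRatios.

Section BoundaryRatio.
Context {R : realType} {d0 : measure_display} {X : measurableType d0}.
Context {dist : X -> X -> R} {mu : {measure set X -> \bar R}}.
Hypothesis dist_metric : is_metric dist.
Hypothesis dist_geodesic : geodesic_space dist.
Hypothesis mopen_measurable : forall A : set X, mopen dist A -> measurable A.
Context {U : nat -> set X}.
Hypothesis U_measurable : forall n, measurable (U n).
Hypothesis U_pos : forall n, (0 < mu (U n) < +oo)%E.
Hypothesis U_ratio : boundary_ratio_vanishes dist mu U.

Lemma measurable_bnbhd d (A : set X) : measurable (bnbhd dist d A).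
Proof.
rewrite -[bnbhd _ _ _]setCK; apply: measurableC; apply: mopen_measurable.
exact: (mopen_setC_bnbhd dist_metric).
Qed.

Lemma boundary_ratio_vanishes_near_ball r : 0 < r ->
  \forall n \near \oo, exists c, mball dist c r `<=` U n.
Proof.
move=> r0; have half : 0 < 2^-1 :> R by rewrite invr_gt0.
have := cvge_ratio0_le _ _ U_pos (U_ratio _ r0) _ half.
apply: filterS => n rUn; apply: contrapT => noball.
have Ur : (mu (U n) <= mu (bnbhd dist r (U n)))%E.
  apply: le_measure; rewrite ?inE //; first exact: measurable_bnbhd.
  exact: sub_bnbhd_no_ball dist_metric dist_geodesic _ _ noball.
move: (le_trans Ur rUn).
case: (mu (U n)) (U_pos n) => [u /andP[u0 _]| /andP[_] |] //.
have {}u0 : 0 < u := u0.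
by rewrite -EFinM lee_fin; lra.
Qed.

Lemma boundary_ratio_vanishes_approximation (V : nat -> set X) :
  is_approximation dist U V -> boundary_ratio_vanishes dist mu V.
Proof.
move=> [V_open [h h0 UVh]] d d_gt0.
have half : 0 < 2^-1 :> R by rewrite invr_gt0.
pose bound n := (2%:E * (mu (bnbhd dist (d + h) (U n)) / mu (U n)))%E.
apply: (@squeeze_cvge _ _ _ _ (cst 0%E) _ bound); last 2 first.
- exact: cvg_cst.
- rewrite -(mule0 2%:E); apply: cvgeZl => //.
  by apply: U_ratio; rewrite addr_gt0.
apply: filterS (cvge_ratio0_le _ _ U_pos (U_ratio _ h0) _ half) => n hU.
have muVd_le : (mu (bnbhd dist d (V n)) <= mu (bnbhd dist (d + h) (U n)))%E.
  apply: le_measure; rewrite ?inE; try exact: measurable_bnbhd.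
  exact: bnbhd_approx_sub dist_metric dist_geodesic _ _ _ _ (ltW h0) (UVh n).
have muU_le : (mu (U n) <= mu (V n) + mu (bnbhd dist h (U n)))%E.
  apply: le_trans (measureU2 _ _ _); last exact: measurable_bnbhd.
  - apply: le_measure; rewrite ?inE //; last first.
      move=> x Ux; have [Vx|nVx] := pselect (V n x); first by left.
      by right; apply: UVh; left.
    by apply: measurableU; [exact: mopen_measurable | exact: measurable_bnbhd].
  - exact: mopen_measurable.
apply/andP; split.
  by apply: mule_ge0 => //; rewrite inve_ge0.
apply: lee_ratio => //; first by rewrite measure_ge0 muVd_le.
move: (U_pos n) muU_le hU; case: (mu (U n)) => [u /andP[u0 _]| /andP[_] |] //.
have {}u0 : 0 < u := u0.
case: (mu (bnbhd dist h (U n))) => [w| |] //; last by rewrite addeNy leeNy_eq.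
case: (mu (V n)) => [v| |] //; last by rewrite gt0_muley ?leey.
by rewrite -EFinD -EFinM !lee_fin; lra.
Qed.

End BoundaryRatio.

Theorem lemma2p5 (R : realType) (d0 : measure_display) (X : measurableType d0)
  (dist : X -> X -> R) (mu : {measure set X -> \bar R})
  (Hmetric : is_metric dist) (Hgeod : geodesic_space dist)
  (Hborel : forall A : set X, mopen dist A -> measurable A)
  (U : nat -> set X)
  (HUmeas : forall n, measurable (U n))
  (HUpos : forall n, (0 < mu (U n) < +oo)%E)
  (HU : boundary_ratio_vanishes dist mu U) :
  (forall r : R, 0 < r -> exists n0 : nat, forall n, (n0 <= n)%N ->
      exists c : X, mball dist c r `<=` U n) /\
  (forall V : nat -> set X, is_approximation dist U V ->
      boundary_ratio_vanishes dist mu V).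
Proof.
split.
- move=> r r0.
  have [n0 _ ball] :=
    boundary_ratio_vanishes_near_ball Hmetric Hgeod Hborel HUmeas HUpos HU _ r0.
  by exists n0 => n; apply: ball.
- exact: boundary_ratio_vanishes_approximation.
Qed.
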